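(* Let $A\in\mathbb{R}^{m\times n}$ have no zero row, with rows $a_1^T,\dots,a_m^T$, let ${\bf u}=(\mu_1,\dots,\mu_m)\in\mathbb{R}^m$, $h_{k,l}=a_k^Ta_l/\|a_l\|_2^2$, and let $C({\bf u})\in\mathbb{R}^{m\times m}$ be the unit upper triangular matrix whose $(i,j)$ entry for $j>i$ is $$\sum_{v=2}^{j-i+1}(-1)^{v-1}\sum_{i=t_1<t_2<\dots<t_v=j}\ \prod_{s=1}^{v-1}\mu_{t_{s+1}}\prod_{s=1}^{v-1}h_{t_s,t_{s+1}}.$$ Let $\Lambda=\mathrm{diag}(\mu_1,\dots,\mu_m)$ and $M=\mathrm{diag}(1/\|a_1\|_2^2,\dots,1/\|a_m\|_2^2)$. Then there exists an upper triangular matrix $T_u({\bf u})\in\mathbb{R}^{m\times m}$ with diagonal entries $[T_u({\bf u})](i,i)=\mu_i\|a_i\|_2^2$ such that $\Lambda C({\bf u})=T_u({\bf u})M$.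
   Context: The inner sum runs over strictly increasing integer sequences from $i$ to $j$ of length $v$. *)

From HB Require Import structures.
From mathcomp Require Import all_boot all_order all_algebra.
Set Implicit Arguments. Unset Strict Implicit. Unset Printing Implicit Defensive.
Import Order.TTheory GRing.Theory Num.Theory.
Local Open Scope ring_scope.

Section Defs.
Variables (R : realFieldType) (m n : nat).

Definition rownorm2 (A : 'M[R]_(m, n)) (k : 'I_m) : R :=
  \sum_(p < n) A k p ^+ 2.

Definition hcoef (A : 'M[R]_(m, n)) (k l : 'I_m) : R :=
  (\sum_(p < n) A k p * A l p) / rownorm2 A l.

Definition chain_from_to v (t : v.-tuple 'I_m) (i j : 'I_m) : bool :=
  [&& head i t == i, last i t == j & sorted (fun a b : 'I_m => a < b)%N t].

Definition Centry (A : 'M[R]_(m, n)) (u : 'rV[R]_m) (i j : 'I_m) : R :=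
  if i == j then 1
  else if (i < j)%N then
    \sum_(2 <= v < (j - i).+2)
      (-1) ^+ v.-1 *
      \sum_(t : v.-tuple 'I_m | chain_from_to t i j)
        ((\prod_(p <- zip t (behead t)) u 0 p.2) *
         (\prod_(p <- zip t (behead t)) hcoef A p.1 p.2))
  else 0.

Definition Cmat (A : 'M[R]_(m, n)) (u : 'rV[R]_m) : 'M[R]_m :=
  \matrix_(i, j) Centry A u i j.

End Defs.

From HB Require Import structures.
From mathcomp Require Import all_boot all_order all_algebra.
Import Order.TTheory GRing.Theory Num.Theory.
Local Open Scope ring_scope.

(* Take T := Lambda C(u) diag(||a_j||^2): it is upper triangular with the
   required diagonal because C(u) is unit upper triangular, and multiplying by
   M undoes the right scaling because no row of A vanishes. *)

Lemma mulmx_diagK (F : fieldType) (p m : nat) (X : 'M[F]_(p, m)) (d : 'I_m -> F) :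
  (forall j, d j != 0) ->
  X *m diag_mx (\row_j d j) *m diag_mx (\row_j (d j)^-1) = X.
Proof.
move=> d_neq0; apply/matrixP => i j.
by rewrite !mul_mx_diag !mxE -mulrA mulfV ?mulr1.
Qed.

Lemma rownorm2_eq0 (R : realFieldType) (m n : nat) (A : 'M[R]_(m, n)) (i : 'I_m) :
  (rownorm2 A i == 0) = (row i A == 0).
Proof.
apply/eqP/eqP => [/psumr_eq0P norm0 | /rowP row0].
- apply/rowP => p; rewrite !mxE.
  by apply/eqP; rewrite -sqrf_eq0 norm0 // => q _; apply: sqr_ge0.
- by apply: big1 => p _; have := row0 p; rewrite !mxE => ->; rewrite expr0n.
Qed.

Section Cmat.
Variables (R : realFieldType) (m n : nat) (A : 'M[R]_(m, n)) (u : 'rV[R]_m).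

Lemma Cmat_diag (i : 'I_m) : Cmat A u i i = 1.
Proof. by rewrite mxE /Centry eqxx. Qed.

Lemma Cmat_lower (i j : 'I_m) : (j < i)%N -> Cmat A u i j = 0.
Proof.
move=> lt_ji; have /negbTE neq_ij : i != j by rewrite -val_eqE gtn_eqF.
by rewrite mxE /Centry neq_ij ltnNge ltnW.
Qed.

End Cmat.

Theorem lemma3p10 (R : realFieldType) (m n : nat) (A : 'M[R]_(m, n))
  (u : 'rV[R]_m) :
  (forall i : 'I_m, row i A != 0) ->
  exists T : 'M[R]_m,
    (forall i j : 'I_m, (j < i)%N -> T i j = 0) /\
    (forall i : 'I_m, T i i = u 0 i * rownorm2 A i) /\
    diag_mx u *m Cmat A u = T *m diag_mx (\row_i (rownorm2 A i)^-1).
Proof.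
move=> rowA_neq0.
exists (diag_mx u *m Cmat A u *m diag_mx (\row_j rownorm2 A j)).
split; [|split].
- by move=> i j lt_ji; rewrite mul_mx_diag mxE mul_diag_mx mxE Cmat_lower ?mulr0 ?mul0r.
- by move=> i; rewrite mul_mx_diag mxE mul_diag_mx mxE Cmat_diag mulr1 mxE.
- by rewrite mulmx_diagK // => j; rewrite rownorm2_eq0.
Qed.
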